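(* Suppose $\mathcal Z$ and $\mathcal U$ are compact and contain the origin, $(A,B)$ is controllable and $(A,C)$, $(A,H)$ are observable, and the simulated ROM trajectory satisfies $\bar u_k\in\mathcal U$ and $H\bar x_k\in\mathcal Z$ for all $k\ge\underline k$. Then the set $\bar{\mathcal X}$ defined in the context is compact (every $b_{\bar x,l}$ is finite) and $\bar x_k\in\bar{\mathcal X}$ for all $k\ge\underline k$.
   Context: $A\in\mathbb R^{n\times n}$, $B\in\mathbb R^{n\times m}$, $C\in\mathbb R^{p\times n}$, $H\in\mathbb R^{o\times n}$. Polytopes $\mathcal Z=\{z:H_zz\le b_z\}\subset\mathbb R^o$ and $\mathcal U=\{u:H_uu\le b_u\}\subset\mathbb R^m$. The simulated ROM is $\bar x_{k+1}=A\bar x_k+B\bar u_k$ for all $k\ge\underline k$. Fix an integer $\bar i\ge n-1$. Let $H_{\bar x}=[I,\,-I]^T\in\mathbb R^{2n\times n}$ with rows $h_{\bar x,l}^T$, $l=1,\dots,2n$. Define $b_{\bar x,l}$ as the optimal value of the linear program: maximize $h_{\bar x,l}^T\bar x_0$ over $\bar x_0,\dots,\bar x_{\bar i}$ and $\bar u_0,\dots,\bar u_{\bar i-1}$ subject to $\bar x_{i+1}=A\bar x_i+B\bar u_i$, $\bar u_i\in\mathcal U$ for $i=0,\dots,\bar i-1$, and $H\bar x_i\in\mathcal Z$ for $i=0,\dots,\bar i$. Define $\bar{\mathcal X}=\{\bar x:H_{\bar x}\bar x\le b_{\bar x}\}$. *)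

From HB Require Import structures.
From mathcomp Require Import all_boot all_order all_algebra.
From mathcomp Require Import all_classical all_reals all_analysis.
Set Implicit Arguments. Unset Strict Implicit. Unset Printing Implicit Defensive.
Import Order.TTheory GRing.Theory Num.Theory.
Import numFieldNormedType.Exports.
Local Open Scope classical_set_scope.
Local Open Scope ring_scope.

Definition polyset (R : realType) (o q : nat) (Hp : 'M[R]_(q, o)) (bp : 'cV[R]_q)
  : set 'cV[R]_o := [set z | forall i : 'I_q, (Hp *m z) i 0 <= bp i 0].

Definition ctrb_mx (R : realType) (n m : nat) (A : 'M[R]_n) (B : 'M[R]_(n, m)) :=
  \mxrow_(k < n) (A ^+ k *m B).
Definition obsv_mx (R : realType) (n p : nat) (A : 'M[R]_n) (C : 'M[R]_(p, n)) :=
  \mxcol_(k < n) (C *m A ^+ k).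

Definition controllable (R : realType) (n m : nat) (A : 'M[R]_n) (B : 'M[R]_(n, m)) :=
  \rank (ctrb_mx A B) = n.
Definition observable (R : realType) (n p : nat) (A : 'M[R]_n) (C : 'M[R]_(p, n)) :=
  \rank (obsv_mx A C) = n.

Definition Hxbar (R : realType) (n : nat) : 'M[R]_(n + n, n) :=
  col_mx 1%:M (- 1%:M).

Definition lp_feasible (R : realType) (n m o qz qu : nat)
  (A : 'M[R]_n) (B : 'M[R]_(n, m)) (H : 'M[R]_(o, n))
  (Hz : 'M[R]_(qz, o)) (bz : 'cV[R]_qz) (Hu : 'M[R]_(qu, m)) (bu : 'cV[R]_qu)
  (ibar : nat) (xs : nat -> 'cV[R]_n) (us : nat -> 'cV[R]_m) : Prop :=
  (forall i, (i < ibar)%N -> xs i.+1 = A *m xs i + B *m us i) /\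
  (forall i, (i < ibar)%N -> polyset Hu bu (us i)) /\
  (forall i, (i <= ibar)%N -> polyset Hz bz (H *m xs i)).

(* b_{xbar,l}: optimal value (in the extended reals; sup of the objective over
   the feasible set) of: maximize h_l^T xbar_0 *)
Definition bxbar (R : realType) (n m o qz qu : nat)
  (A : 'M[R]_n) (B : 'M[R]_(n, m)) (H : 'M[R]_(o, n))
  (Hz : 'M[R]_(qz, o)) (bz : 'cV[R]_qz) (Hu : 'M[R]_(qu, m)) (bu : 'cV[R]_qu)
  (ibar : nat) (l : 'I_(n + n)) : \bar R :=
  ereal_sup [set ((row l (Hxbar R n) *m xs 0%N) 0 0)%:E |
              xs in [set xs | exists us, lp_feasible A B H Hz bz Hu bu ibar xs us]].

Definition Xbar (R : realType) (n m o qz qu : nat)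
  (A : 'M[R]_n) (B : 'M[R]_(n, m)) (H : 'M[R]_(o, n))
  (Hz : 'M[R]_(qz, o)) (bz : 'cV[R]_qz) (Hu : 'M[R]_(qu, m)) (bu : 'cV[R]_qu)
  (ibar : nat) : set 'cV[R]_n :=
  [set x | forall l : 'I_(n + n),
      (((Hxbar R n) *m x) l 0)%:E <= bxbar A B H Hz bz Hu bu ibar l]%E.

(* Let (x_i, u_i)_{i <= ibar} be a feasible point of the LP defining b_l.
   Write x_k = A^k x_0 + (forced response); the forced response is bounded
   because the inputs lie in the compact set U, hence so is the free output
   H A^k x_0 = H x_k - H (x_k - A^k x_0), the outputs H x_k lying in the
   compact set Z.  Since (A, H) is observable and ibar >= n - 1, x_0 is a
   fixed linear combination of H A^k x_0 (k < n), so feasible initial states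
   are uniformly bounded: every LP value b_l is at most that bound, and at
   least 0 since the zero trajectory is feasible.  Thus Xbar is a box with
   finite sides, hence compact.  Finally each tail of the simulated ROM
   trajectory is feasible, so its initial state lies in Xbar. *)

From HB Require Import structures.
From mathcomp Require Import all_boot all_order all_algebra.
From mathcomp Require Import all_classical all_reals all_analysis.
From mathcomp Require Import zify.
Set Implicit Arguments. Unset Strict Implicit. Unset Printing Implicit Defensive.
Import Order.TTheory GRing.Theory Num.Theory.
Import numFieldNormedType.Exports.
Local Open Scope classical_set_scope.
Local Open Scope ring_scope.

Section MatrixNorm.
Variable R : realType.

Lemma entry_le_mx_norm a b (M : 'M[R]_(a, b)) i j : `|M i j| <= `|M|.
Proof.
have -> : `|M| = mx_norm M by []; rewrite mx_normrE.
by apply/bigmax_geP; right; exists (i, j).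
Qed.

Lemma mx_norm_le a b (M : 'M[R]_(a, b)) c :
  0 <= c -> (forall i j, `|M i j| <= c) -> `|M| <= c.
Proof.
move=> c0 hM; have -> : `|M| = mx_norm M by []; rewrite mx_normrE.
by apply/bigmax_leP; split=> // -[i j] _; exact: hM.
Qed.

Lemma mx_norm_mulmx a k b (M : 'M[R]_(a, k)) (N : 'M[R]_(k, b)) :
  `|M *m N| <= `|M| * `|N| *+ k.
Proof.
apply: mx_norm_le => [|i j]; first by rewrite mulrn_wge0 ?mulr_ge0.
rewrite mxE; apply: le_trans (ler_norm_sum _ _ _) _.
rewrite -[k in _ *+ k]card_ord -sumr_const; apply: ler_sum => l _; rewrite normrM.
by apply: ler_pM; rewrite ?entry_le_mx_norm.
Qed.

Lemma mx_norm_trmx a b (M : 'M[R]_(a, b)) : `|M^T| = `|M|.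
Proof.
have le_tr c d (N : 'M[R]_(c, d)) : `|N^T| <= `|N|.
  by apply: mx_norm_le => // i j; rewrite mxE entry_le_mx_norm.
apply/eqP; rewrite eq_le; apply/andP; split; first exact: le_tr.
by have := le_tr _ _ M^T; rewrite trmxK.
Qed.

Lemma trmx_continuous a b : continuous (@trmx R a b).
Proof.
move=> M; apply/(@cvgrPdist_lt _ _ _ (nbhs M) (nbhs_filter M)) => e e0; near=> N.
rewrite -linearB /= mx_norm_trmx.
by near: N; apply: (@cvgr_dist_lt _ _ _ (nbhs M) _ id M cvg_id).
Unshelve. all: by end_near. Qed.

Lemma cV_box_compact n (S : 'I_n -> set R) :
  (forall i, compact (S i)) -> compact [set x : 'cV[R]_n | forall i, S i (x i 0)].
Proof.
move=> cS.
have -> : [set x : 'cV[R]_n | forall i, S i (x i 0)] =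
    (@trmx R 1 n) @` [set v : 'rV[R]_n | forall i, S i (v 0 i)].
  rewrite predeqE => x; split => [Sx|[v Sv <-] i]; last by rewrite mxE.
  by exists x^T; rewrite ?trmxK // => i; rewrite mxE.
apply: continuous_compact; last exact: rV_compact.
exact/continuous_subspaceT/trmx_continuous.
Qed.

End MatrixNorm.

Section BoundedFamily.
Variables (R : realType) (T : Type) (P : set T).

Definition bounded_on a b (f : T -> 'M[R]_(a, b)) :=
  exists c : R, forall t, P t -> `|f t| <= c.

Lemma bounded_on_cst a b (M : 'M[R]_(a, b)) : bounded_on (fun=> M).
Proof. by exists `|M|. Qed.

Lemma bounded_on_eq a b (f g : T -> 'M[R]_(a, b)) :
  (forall t, P t -> f t = g t) -> bounded_on f -> bounded_on g.
Proof. by move=> fg [c hc]; exists c => t Pt; rewrite -fg // hc. Qed.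

Lemma bounded_onD a b (f g : T -> 'M[R]_(a, b)) :
  bounded_on f -> bounded_on g -> bounded_on (fun t => f t + g t).
Proof.
move=> [c hc] [d hd]; exists (c + d) => t Pt.
by apply: le_trans (ler_normD _ _) _; rewrite lerD ?hc ?hd.
Qed.

Lemma bounded_onN a b (f : T -> 'M[R]_(a, b)) :
  bounded_on f -> bounded_on (fun t => - f t).
Proof. by move=> [c hc]; exists c => t Pt; rewrite normrN hc. Qed.

Lemma bounded_onMl a k b (M : 'M[R]_(a, k)) (f : T -> 'M[R]_(k, b)) :
  bounded_on f -> bounded_on (fun t => M *m f t).
Proof.
move=> [c hc]; exists (`|M| * c *+ k) => t Pt.
apply: le_trans (mx_norm_mulmx _ _) _.
by rewrite lerMn2r ler_wpM2l ?hc ?orbT.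
Qed.

Lemma bounded_on_sum a b (I : Type) (s : seq I) (g : I -> T -> 'M[R]_(a, b)) :
  (forall i, bounded_on (g i)) -> bounded_on (fun t => \sum_(i <- s) g i t).
Proof.
move=> hg; elim: s => [|i s IH].
  by apply: bounded_on_eq (bounded_on_cst 0) => t _; rewrite big_nil.
apply: bounded_on_eq (bounded_onD (hg i) IH) => t _; by rewrite big_cons.
Qed.

Lemma compact_bounded_on a b (S : set 'M[R]_(a, b)) (f : T -> 'M[R]_(a, b)) :
  compact S -> (forall t, P t -> S (f t)) -> bounded_on f.
Proof.
move=> /compact_bounded [M [_ hM]] Sf; exists (M + 1) => t Pt.
by apply: (hM (M + 1)); [rewrite ltrDl|exact: Sf].
Qed.

End BoundedFamily.

(* Observability of (A, H) means the observability matrix has full column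
   rank, so it has a left inverse: every state is a fixed linear combination
   of its free outputs H A^k x, k < n. *)
Lemma observable_reconstruction (R : realType) (n o : nat)
    (A : 'M[R]_n) (H : 'M[R]_(o, n)) :
  observable A H ->
  exists L : 'I_n -> 'M[R]_(n, o),
    forall b (x : 'M[R]_(n, b)), x = \sum_(k < n) L k *m (H *m A ^+ k *m x).
Proof.
move=> obsH; have /row_fullP [L hL] : row_full (obsv_mx A H) by rewrite /row_full obsH.
exists (submxrow L) => b x.
under eq_bigr do rewrite mulmxA.
by rewrite -mulmx_suml -mul_mxrow_mxcol submxrowK -/(obsv_mx A H) hL mul1mx.
Qed.

Section FeasibleTrajectories.
Variables (R : realType) (n m o qz qu ibar : nat).
Variables (A : 'M[R]_n) (B : 'M[R]_(n, m)) (H : 'M[R]_(o, n)).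
Variables (Hz : 'M[R]_(qz, o)) (bz : 'cV[R]_qz) (Hu : 'M[R]_(qu, m)) (bu : 'cV[R]_qu).
Hypotheses (cZ : compact (polyset Hz bz)) (cU : compact (polyset Hu bu)).

Definition feasible (t : (nat -> 'cV[R]_n) * (nat -> 'cV[R]_m)) :=
  lp_feasible A B H Hz bz Hu bu ibar t.1 t.2.

(* Forced response: x_k - A^k x_0 = sum_{i<k} A^(k-1-i) B u_i is bounded,
   because the inputs lie in the compact set U. *)
Lemma forced_response_bounded k : (k <= ibar)%N ->
  bounded_on feasible (fun t => t.1 k - A ^+ k *m t.1 0%N).
Proof.
elim: k => [_|k IH lt_k].
  by apply: bounded_on_eq (bounded_on_cst _ 0) => t _; rewrite mul1mx subrr.
have bounded_u : bounded_on feasible (fun t => t.2 k).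
  by apply: (compact_bounded_on cU) => t [_ [Ut _]]; exact: Ut.
apply: bounded_on_eq (bounded_onD (bounded_onMl A (IH (ltnW lt_k)))
                                  (bounded_onMl B bounded_u)) => t [dyn _].
by rewrite dyn // exprS mulmxBr mulmxA -mulmxE addrAC.
Qed.

(* Free output response: H A^k x_0 = H x_k - H (x_k - A^k x_0) is bounded,
   because the outputs lie in the compact set Z. *)
Lemma free_output_bounded k : (k <= ibar)%N ->
  bounded_on feasible (fun t => H *m A ^+ k *m t.1 0%N).
Proof.
move=> le_k; have bounded_y : bounded_on feasible (fun t => H *m t.1 k).
  by apply: (compact_bounded_on cZ) => t [_ [_ Zy]]; exact: Zy.
apply: bounded_on_eq (bounded_onD bounded_y
                       (bounded_onN (bounded_onMl H (forced_response_bounded le_k)))).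
by move=> t _; rewrite mulmxBr opprB addrC subrK mulmxA.
Qed.

Lemma initial_state_bounded : (n.-1 <= ibar)%N -> observable A H ->
  bounded_on feasible (fun t => t.1 0%N).
Proof.
move=> le_n obsH; have [L xE] := observable_reconstruction obsH.
apply: (bounded_on_eq (f := fun t => \sum_(k < n) L k *m (H *m A ^+ k *m t.1 0%N))).
  by move=> t _; rewrite -xE.
apply: bounded_on_sum => k; apply/bounded_onMl/free_output_bounded.
by have := ltn_ord k; lia.
Qed.

Lemma Hxbar_mulmx (x : 'cV[R]_n) : Hxbar R n *m x = col_mx x (- x).
Proof. by rewrite /Hxbar mul_col_mx mulNmx !mul1mx. Qed.

Lemma Hxbar_entry_le (x : 'cV[R]_n) l : (Hxbar R n *m x) l 0 <= `|x|.
Proof.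
rewrite Hxbar_mulmx mxE; apply: le_trans (ler_norm _) _.
by case: splitP => i _; rewrite ?mxE ?normrN entry_le_mx_norm.
Qed.

Local Notation bx := (bxbar A B H Hz bz Hu bu ibar).
Local Notation X := (Xbar A B H Hz bz Hu bu ibar).

Lemma feasible_Xbar t : feasible t -> X (t.1 0%N).
Proof.
move=> Ft l; apply: ereal_sup_ubound; exists t.1; first by exists t.2.
by rewrite -row_mul mxE.
Qed.

(* When the origin is admissible the zero trajectory is feasible, so each
   LP value is at least 0 (in particular, not -oo). *)
Lemma bxbar_ge0 l : polyset Hz bz 0 -> polyset Hu bu 0 -> (0 <= bx l)%E.
Proof.
move=> Z0 U0.
have F0 : feasible (fun=> 0, fun=> 0).
  by split; [move=> i _; rewrite !mulmx0 addr0|split=> i _; rewrite ?mulmx0].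
by have := feasible_Xbar F0 l; rewrite mulmx0 mxE.
Qed.

Lemma bxbar_le c l : (forall t, feasible t -> `|t.1 0%N| <= c) -> (bx l <= c%:E)%E.
Proof.
move=> hc; apply: ge_ereal_sup => _ [xs [us F] <-].
by rewrite lee_fin -row_mul mxE (le_trans (Hxbar_entry_le _ _)) // (hc (xs, us)).
Qed.

Lemma bxbar_fin_num : (n.-1 <= ibar)%N -> observable A H ->
  polyset Hz bz 0 -> polyset Hu bu 0 -> forall l, bx l \is a fin_num.
Proof.
move=> le_n obsH Z0 U0 l; have [c hc] := initial_state_bounded le_n obsH.
by rewrite ge0_fin_numE ?bxbar_ge0 // (le_lt_trans (bxbar_le l hc)) ?ltry.
Qed.

Lemma Xbar_box : (forall l, bx l \is a fin_num) ->
  X = [set x : 'cV[R]_n | forall i,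
        `[- fine (bx (rshift n i)), fine (bx (lshift n i))]%classic (x i 0)].
Proof.
move=> fin; rewrite predeqE => x; split => [Xx i | Bx l].
  have := Xx (lshift n i); have := Xx (rshift n i).
  rewrite !Hxbar_mulmx col_mxEu col_mxEd mxE => lo hi.
  rewrite /= in_itv /= lerNl -!lee_fin !fineK //; exact/andP.
rewrite Hxbar_mulmx mxE -(fineK (fin l)) lee_fin.
case: splitP => i li; have := Bx i; rewrite /= in_itv /= => /andP[lo hi].
  by have -> : l = lshift n i by apply: val_inj.
have -> : l = rshift n i by apply: val_inj.
by rewrite mxE lerNl.
Qed.

Lemma Xbar_compact : (forall l, bx l \is a fin_num) -> compact X.
Proof.
move=> fin; rewrite Xbar_box //.
apply: (@cV_box_compact _ _
  (fun i => `[- fine (bx (rshift n i)), fine (bx (lshift n i))]%classic)).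
by move=> i; exact: segment_compact.
Qed.

Lemma rom_tail_feasible kbar (xbar : nat -> 'cV[R]_n) (ubar : nat -> 'cV[R]_m) k :
  (forall k, (kbar <= k)%N -> xbar k.+1 = A *m xbar k + B *m ubar k) ->
  (forall k, (kbar <= k)%N -> polyset Hu bu (ubar k)) ->
  (forall k, (kbar <= k)%N -> polyset Hz bz (H *m xbar k)) ->
  (kbar <= k)%N -> feasible (fun i => xbar (k + i)%N, fun i => ubar (k + i)%N).
Proof.
move=> dyn Uu Zy le_k; have le_ki i : (kbar <= k + i)%N.
  exact: leq_trans le_k (leq_addr _ _).
by split; [move=> i _; rewrite /= addnS dyn|split=> i _; [apply: Uu|apply: Zy]].
Qed.

End FeasibleTrajectories.

Theorem proposition1 (R : realType) (n m p o qz qu : nat)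
  (A : 'M[R]_n) (B : 'M[R]_(n, m)) (C : 'M[R]_(p, n)) (H : 'M[R]_(o, n))
  (Hz : 'M[R]_(qz, o)) (bz : 'cV[R]_qz) (Hu : 'M[R]_(qu, m)) (bu : 'cV[R]_qu)
  (ibar kbar : nat) (xbar : nat -> 'cV[R]_n) (ubar : nat -> 'cV[R]_m) :
  (n.-1 <= ibar)%N ->
  compact (polyset Hz bz) -> polyset Hz bz 0 ->
  compact (polyset Hu bu) -> polyset Hu bu 0 ->
  controllable A B -> observable A C -> observable A H ->
  (forall k, (kbar <= k)%N -> xbar k.+1 = A *m xbar k + B *m ubar k) ->
  (forall k, (kbar <= k)%N -> polyset Hu bu (ubar k)) ->
  (forall k, (kbar <= k)%N -> polyset Hz bz (H *m xbar k)) ->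
  (forall l, bxbar A B H Hz bz Hu bu ibar l \is a fin_num) /\
  compact (Xbar A B H Hz bz Hu bu ibar) /\
  (forall k, (kbar <= k)%N -> Xbar A B H Hz bz Hu bu ibar (xbar k)).
Proof.
move=> le_n cZ Z0 cU U0 _ _ obsH dyn Uu Zy.
have fin := bxbar_fin_num B cZ cU le_n obsH Z0 U0.
split; [exact: fin|split; first exact: Xbar_compact].
move=> k le_k; rewrite -[k]addn0.
exact: feasible_Xbar (rom_tail_feasible ibar dyn Uu Zy le_k).
Qed.
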